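(* There exists an approval-based SCV instance with exactly two candidate subsets and quotas $k_1=k_2=1$ for which no committee satisfies Span-wise Justified Representation (SW-JR).
   Context: An approval-based sub-committee voting (SCV) instance consists of a set of voters $N=\{1,\ldots,n\}$, a finite set of candidates $C$ partitioned into candidate subsets $C_1,\ldots,C_\ell$, positive integer quotas $k_j\le |C_j|$ for $j=1,\ldots,\ell$ with $k=\sum_{j=1}^\ell k_j$, and an approval ballot $A_i\subseteq C$ for each voter $i\in N$. A committee is a set $W\subseteq C$ with $|W\cap C_j|=k_j$ for every $j$ (so $|W|=k$). A committee $W$ satisfies SW-JR if for every $X\subseteq N$ with $|X|\ge n/k$ and $|\bigcap_{i\in X}A_i|\ge 1$ we have $|W\cap \bigcup_{i\in X}A_i|\ge 1$. *)

From mathcomp Require Import all_boot.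
Set Implicit Arguments. Unset Strict Implicit. Unset Printing Implicit Defensive.

(* Voters: finite type V (N = V, n = #|V|); candidates: finite type Cd (C = Cd);
   candidate subsets C_1..C_l given by a labelling  part : Cd -> 'I_l
   (C_j = [set c | part c == j]); quotas  k : 'I_l -> nat;
   ballots  A : V -> {set Cd}. *)

Definition block (Cd : finType) (l : nat) (part : Cd -> 'I_l) (j : 'I_l) : {set Cd} :=
  [set c | part c == j].

Definition scv_instance (V Cd : finType) (l : nat) (part : Cd -> 'I_l)
    (k : 'I_l -> nat) : Prop :=
  0 < #|V| /\ forall j : 'I_l, 0 < k j /\ k j <= #|block part j|.

Definition total_quota (l : nat) (k : 'I_l -> nat) : nat := \sum_(j < l) k j.

Definition committee (Cd : finType) (l : nat) (part : Cd -> 'I_l)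
    (k : 'I_l -> nat) (W : {set Cd}) : Prop :=
  forall j : 'I_l, #|W :&: block part j| = k j.

(* SW-JR: for every X ⊆ N with |X| >= n/k and |∩_{i∈X} A_i| >= 1,
   |W ∩ ∪_{i∈X} A_i| >= 1.  Since k > 0, |X| >= n/k  <=>  n <= |X| * k. *)
Definition SW_JR (V Cd : finType) (l : nat) (k : 'I_l -> nat)
    (A : V -> {set Cd}) (W : {set Cd}) : Prop :=
  forall X : {set V},
    #|V| <= #|X| * total_quota k ->
    1 <= #|\bigcap_(i in X) A i| ->
    1 <= #|W :&: \bigcup_(i in X) A i|.

From mathcomp Require Import all_boot.
Set Implicit Arguments. Unset Strict Implicit. Unset Printing Implicit Defensive.

(* Take two voters and three candidates, with C_1 = {0, 1}, C_2 = {2} and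
   voter i approving only candidate i of C_1.  Then k = n = 2, so every single
   voter is a cohesive group of size n/k, and SW-JR forces both candidates of
   C_1 into the committee, although k_1 = 1. *)

Section SWJRConsequences.

Variables (V Cd : finType) (l : nat) (part : Cd -> 'I_l) (k : 'I_l -> nat).

Lemma SW_JR_meets_ballot (A : V -> {set Cd}) (W : {set Cd}) (i : V) :
  #|V| <= total_quota k -> SW_JR k A W -> A i != set0 -> W :&: A i != set0.
Proof.
move=> n_le_k sw Ai_nonempty.
by have := sw [set i]; rewrite cards1 mul1n !big_set1 !card_gt0; apply.
Qed.

Lemma committee_card_subset (W S : {set Cd}) (j : 'I_l) :
  committee part k W -> S \subset W -> S \subset block part j -> #|S| <= k j.
Proof.
move=> comm sSW sSj; rewrite -(comm j).
by apply: subset_leq_card; rewrite subsetI sSW.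
Qed.

End SWJRConsequences.

Definition cex_part (c : 'I_3) : 'I_2 := if c < 2 then ord0 else ord_max.

Definition cex_ballot (i : 'I_2) : {set 'I_3} := [set widen_ord (leqnSn 2) i].

Lemma cex_instance : @scv_instance 'I_2 'I_3 2 cex_part (fun _ => 1).
Proof.
split=> [|j]; first by rewrite card_ord.
split=> //; rewrite card_gt0; apply/set0Pn.
by case: j => [[|[|//]] lt_j2]; [exists ord0 | exists ord_max];
  rewrite inE /cex_part; apply/eqP/val_inj.
Qed.

Lemma cex_ballot_in_committee (W : {set 'I_3}) (i : 'I_2) :
  SW_JR (fun _ : 'I_2 => 1) cex_ballot W -> widen_ord (leqnSn 2) i \in W.
Proof.
move=> sw; have n_le_k : #|'I_2| <= total_quota (fun _ : 'I_2 => 1).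
  by rewrite /total_quota sum_nat_const card_ord.
have ballot_nonempty : cex_ballot i != set0.
  by apply/set0Pn; exists (widen_ord (leqnSn 2) i); apply: set11.
have /set0Pn [c] := SW_JR_meets_ballot n_le_k sw ballot_nonempty.
by rewrite !inE => /andP [cW /eqP <-].
Qed.

Theorem mainTheorem1 :
  exists (n m : nat) (part : 'I_m -> 'I_2) (A : 'I_n -> {set 'I_m}),
    let k := fun _ : 'I_2 => 1%N in
    @scv_instance 'I_n 'I_m 2 part k /\
    forall W : {set 'I_m}, committee part k W -> ~ SW_JR k A W.
Proof.
exists 2, 3, cex_part, cex_ballot => k; split; first exact: cex_instance.
move=> W comm sw.
pose C1 : {set 'I_3} := [set widen_ord (leqnSn 2) i | i : 'I_2].
have C1_in_W : C1 \subset W.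
  by apply/subsetP=> _ /imsetP [i _ ->]; apply: cex_ballot_in_committee.
have C1_in_block : C1 \subset block cex_part ord0.
  by apply/subsetP=> _ /imsetP [i _ ->]; rewrite inE /cex_part /= ltn_ord.
have := committee_card_subset comm C1_in_W C1_in_block.
by rewrite card_imset ?card_ord // => i j [] /ord_inj.
Qed.
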